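(* Let $n\ge2$, $Q>0$ real, and let $P\in\mathrm{Mat}(n^2,\mathbb{C})$ be a solution of rank $r$ to $$P^*=P,\quad P^2=P,\quad Q^2(P_1P_2P_1-P_2P_1P_2)=P_1-P_2,$$ where $P_1=P\otimes I_n$, $P_2=I_n\otimes P$. Let $k=\tfrac12\operatorname{rank}(P_1-P_2)$. Then $$rn-k+Q^{-1}k\le r^2 .$$
   Context: $I_n$ is the $n\times n$ identity matrix and $\otimes$ is the Kronecker product. *)

From HB Require Import structures.
From mathcomp Require Import all_boot all_order all_algebra.
From mathcomp Require Import complex mxtens.
From mathcomp Require Import reals.
Set Implicit Arguments. Unset Strict Implicit. Unset Printing Implicit Defensive.
Import Order.TTheory GRing.Theory Num.Theory.
Local Open Scope ring_scope.

Definition adjmx (R : realType) (m n : nat) (A : 'M[R[i]]_(m, n)) : 'M[R[i]]_(n, m) :=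
  (map_mx Num.conj A)^T.

(* P1 = P (x) I_n and P2 = I_n (x) P, with the standard Kronecker product
   (tensmx, index (i,j) |-> i*n + j). *)
Definition P1 (R : realType) (n : nat) (P : 'M[R[i]]_(n * n)) : 'M[R[i]]_(n * n * n) :=
  tensmx P (1%:M : 'M[R[i]]_n).
Definition P2 (R : realType) (n : nat) (P : 'M[R[i]]_(n * n)) : 'M[R[i]]_(n * n * n) :=
  castmx (mulnA n n n, mulnA n n n) (tensmx (1%:M : 'M[R[i]]_n) P).

From HB Require Import structures.
From mathcomp Require Import all_boot all_order all_algebra.
From mathcomp Require Import complex mxtens.
From mathcomp Require Import reals.
From mathcomp Require Import ring lra.
Set Implicit Arguments. Unset Strict Implicit. Unset Printing Implicit Defensive.
Import Order.TTheory GRing.Theory Num.Theory.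
Local Open Scope ring_scope.
Local Open Scope complex_scope.
(* Reopened so that [x^*] is [Num.conj x], not the [conjc] of complex_scope. *)
Local Open Scope ring_scope.

(* Write A = P1, B = P2 and a = Q^-2. The relation gives (A - B)^3 = (1 - a)(A - B),
   so tr (A - B)^2 = (1 - a) rank (A - B), which computes tr (A B) = r n - (1 - a) k.
   On the range of A, S = A B A satisfies (S - A)(S - a A) = 0, so S^(-1/2) is an
   explicit combination F of S and A, and W = B A F satisfies W^* W = A and
   tr (W A B) = tr (S F) = r n - k + k / Q.  Finally Re tr (W A B) <= r^2 for every
   such W: using P = P P^*, A B = sum_t x_t y_t^* with sum_t |x_t|^2 = sum_t |y_t|^2
   = r^2, and expanding 0 <= sum_t |W x_t - y_t|^2 gives the bound. *)

Section Adjoint.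
Variable R : realType.
Local Notation C := R[i].

Lemma adjmxE m n (A : 'M[C]_(m, n)) i j : adjmx A i j = (A j i)^*.
Proof. by rewrite !mxE. Qed.

Lemma adjmxM m n p (A : 'M[C]_(m, n)) (B : 'M[C]_(n, p)) :
  adjmx (A *m B) = adjmx B *m adjmx A.
Proof. by rewrite /adjmx map_mxM trmx_mul. Qed.

Lemma adjmxD m n (A B : 'M[C]_(m, n)) : adjmx (A + B) = adjmx A + adjmx B.
Proof. by rewrite /adjmx map_mxD linearD. Qed.

Lemma adjmxB m n (A B : 'M[C]_(m, n)) : adjmx (A - B) = adjmx A - adjmx B.
Proof. by rewrite /adjmx map_mxB linearB. Qed.

Lemma adjmxZ m n c (A : 'M[C]_(m, n)) : adjmx (c *: A) = c^* *: adjmx A.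
Proof. by apply/matrixP=> i j; rewrite !mxE rmorphM. Qed.

Lemma adjmx1 n : adjmx (1%:M : 'M[C]_n) = 1%:M.
Proof. by apply/matrixP=> i j; rewrite adjmxE !mxE eq_sym rmorph_nat. Qed.

Lemma adjmx_tens m n p q (A : 'M[C]_(m, n)) (B : 'M[C]_(p, q)) :
  adjmx (A *t B) = adjmx A *t adjmx B.
Proof. by rewrite /adjmx map_mxT trmx_tens. Qed.

Lemma adjmx_castmx m m' (e : m = m') (A : 'M[C]_m) :
  adjmx (castmx (e, e) A) = castmx (e, e) (adjmx A).
Proof. by case: m' / e. Qed.

Lemma mxtrace_adjmx_mul m n (A B : 'M[C]_(m, n)) :
  \tr (adjmx A *m B) = \sum_j \sum_i (A i j)^* * B i j.
Proof.
by apply: eq_bigr => j _; rewrite mxE; apply: eq_bigr => i _; rewrite adjmxE.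
Qed.

Lemma mxtrace_adjmx_mul_eq0 m n (A : 'M[C]_(m, n)) :
  \tr (adjmx A *m A) = 0 -> A = 0.
Proof.
have norm_ge0 (x : C) : 0 <= x^* * x by rewrite mulrC mul_conjC_ge0.
rewrite mxtrace_adjmx_mul => /eqP.
rewrite psumr_eq0 => [/allP Aj0|j _]; last exact: sumr_ge0.
apply/matrixP => i j; move: (Aj0 j (mem_index_enum j)).
rewrite psumr_eq0 // => /allP/(_ i (mem_index_enum i)).
by rewrite mulrC mul_conjC_eq0 mxE => /eqP.
Qed.

Lemma hermitian_sqr_eq0 n (A : 'M[C]_n) : adjmx A = A -> A *m A = 0 -> A = 0.
Proof.
by move=> hA AA0; apply: mxtrace_adjmx_mul_eq0; rewrite hA AA0 mxtrace0.
Qed.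

End Adjoint.

Lemma mxtrace_idem (F : fieldType) n (A : 'M[F]_n) :
  A *m A = A -> \tr A = (\rank A)%:R.
Proof.
move=> AA; set U := col_base A; set V := row_base A.
have defA : U *m V = A := mulmx_base A.
have VU1 : V *m U = 1%:M.
  apply: (row_full_inj (col_base_full A)); apply: (row_free_inj (row_base_free A)).
  by rewrite mulmx1 [U *m (V *m U)]mulmxA defA -mulmxA defA AA.
by rewrite -{1}defA mxtrace_mulC VU1 mxtrace1.
Qed.

Lemma mxtrace_sqr_hermitian (R : realType) n (D : 'M[R[i]]_n) c :
  adjmx D = D -> D *m D *m D = c *: D -> \tr (D *m D) = c * (\rank D)%:R.
Proof.
move=> hD D3; have [c0 | c0] := eqVneq c 0.
  rewrite {}c0 scale0r in D3 *.
  have D2_0 : D *m D = 0.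
    apply: hermitian_sqr_eq0; first by rewrite adjmxM hD.
    by rewrite mulmxA D3 mul0mx.
  by rewrite D2_0 mxtrace0 mul0r.
set E := c^-1 *: (D *m D).
have EE : E *m E = E.
  by rewrite -scalemxAl -scalemxAr scalerA mulmxA D3 -scalemxAl scalerA mulfVK.
have rankE : \rank E = \rank D.
  apply/eqP; rewrite eqmx_scale ?invr_eq0 // eqn_leq mxrankM_maxl /=.
  have DDD : D *m D *m (c^-1 *: D) = D.
    by rewrite -scalemxAr D3 scalerA mulVf ?scale1r.
  by rewrite -{1}DDD mxrankM_maxl.
by rewrite -rankE -mxtrace_idem // mxtraceZ mulrA mulfV // mul1r.
Qed.

Section IdempotentPair.
Variable K : pzRingType.
Variables A B : K.
Hypotheses (AA : A * A = A) (BB : B * B = B).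

Lemma idem_subr_sqr : (A - B) * (A - B) = A + B - A * B - B * A.
Proof. by rewrite mulrBl !mulrBr AA BB opprB addrA (addrAC A). Qed.

Lemma idem_subr_cube :
  (A - B) * (A - B) * (A - B) = (A - B) - (A * B * A - B * A * B).
Proof.
have xAA x : x * A * A = x * A by rewrite -mulrA AA.
have xBB x : x * B * B = x * B by rewrite -mulrA BB.
rewrite idem_subr_sqr mulrBr !mulrBl !mulrDl ?mulrA AA BB ?xAA ?xBB.
rewrite (addrAC (A + B * A)) addrK [A * B + B]addrC addrK.
by rewrite !opprB addrACA [in RHS]addrACA [- B + _]addrC.
Qed.

Lemma idem_sandwich_sqr c : GRing.comm c A ->
  A * B * A - B * A * B = c * (A - B) ->
  (A * B * A) * (A * B * A) = A * B * A + c * (A * B * A - A).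
Proof.
move=> cA rel; have xAA x : x * A * A = x * A by rewrite -mulrA AA.
have -> : (A * B * A) * (A * B * A) = A * (B * A * B) * A by rewrite !mulrA xAA.
have -> : B * A * B = A * B * A - c * (A - B) by rewrite -rel opprB addrC subrK.
have ASA : A * (A * B * A) * A = A * B * A by rewrite !mulrA AA xAA.
have AcA : A * (c * (A - B)) * A = c * (A - A * B * A).
  by rewrite mulrA -cA -!mulrA mulrBl AA [A * (_ - _)]mulrBr AA.
by rewrite [A * (_ - _)]mulrBr mulrBl ASA AcA -mulrN opprB.
Qed.

End IdempotentPair.

Lemma complex_gt0_neq0 (R : rcfType) (x : R) : 0 < x -> x%:C != 0.
Proof. by move=> x_gt0; rewrite fmorph_eq0 gt_eqF. Qed.

Lemma complex_gt0_addr1_neq0 (R : rcfType) (x : R) : 0 < x -> x%:C + 1 != 0.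
Proof.
by move=> x_gt0; rewrite -(rmorph1 (real_complex R)) -rmorphD fmorph_eq0 gt_eqF ?ltr_wpDr.
Qed.

Section ProjectionPair.
Variable R : realType.
Local Notation C := R[i].
Variable N : nat.
Variables A B : 'M[C]_N.
Hypotheses (hA : adjmx A = A) (hB : adjmx B = B).
Hypotheses (AA : A *m A = A) (BB : B *m B = B).
Variable Q : R.
Hypothesis Q_gt0 : 0 < Q.
Hypothesis rel : (Q ^+ 2)%:C *: (A *m B *m A - B *m A *m B) = A - B.

Let q : C := Q%:C.
Let a : C := (q ^+ 2)^-1.
Let q_neq0 : q != 0 := complex_gt0_neq0 Q_gt0.
Let q1_neq0 : q + 1 != 0 := complex_gt0_addr1_neq0 Q_gt0.

Let sandwich_rel : A *m B *m A - B *m A *m B = a *: (A - B).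
Proof. by rewrite -rel scalerA rmorphXn mulVf ?scale1r // expf_neq0. Qed.

Lemma mxtrace_mul_proj :
  \tr (A *m B) = (\tr A + \tr B - (1 - a) * (\rank (A - B))%:R) / 2.
Proof.
have D3 : (A - B) *m (A - B) *m (A - B) = (1 - a) *: (A - B).
  by rewrite !mulmxE idem_subr_cube -?mulmxE // sandwich_rel scalerBl scale1r.
have hD : adjmx (A - B) = A - B by rewrite adjmxB hA hB.
rewrite -(mxtrace_sqr_hermitian hD D3) mulmxE idem_subr_sqr -?mulmxE //.
by rewrite !raddfB raddfD /= [\tr (B *m A)]mxtrace_mulC; field.
Qed.

Let S := A *m B *m A.

Let SA : S *m A = S. Proof. by rewrite /S -mulmxA AA. Qed.
Let AS : A *m S = S. Proof. by rewrite /S !mulmxA AA. Qed.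

Let SS : S *m S = (1 + a) *: S - a *: A.
Proof.
have AA' : A * A = A by rewrite -mulmxE.
have cA : GRing.comm a%:M A by rewrite /GRing.comm -!mulmxE scalar_mxC.
have rel' : A * B * A - B * A * B = a%:M * (A - B).
  by rewrite -!mulmxE mul_scalar_mx sandwich_rel.
rewrite /S !mulmxE (idem_sandwich_sqr AA' cA rel') -!mulmxE mul_scalar_mx.
by rewrite scalerBr scalerDl scale1r addrA.
Qed.

Definition spanSA l m := l *: S + m *: A.

Let spanSAD l m l' m' : spanSA l m + spanSA l' m' = spanSA (l + l') (m + m').
Proof. by rewrite /spanSA !scalerDl addrACA. Qed.

Let spanSAZ c l m : c *: spanSA l m = spanSA (c * l) (c * m).
Proof. by rewrite /spanSA scalerDr !scalerA. Qed.

Let spanSA_mulS l m : spanSA l m *m S = spanSA (l * (1 + a) + m) (- (l * a)).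
Proof.
by rewrite /spanSA mulmxDl -!scalemxAl SS AS scalerBr !scalerA scalerDl scaleNr addrAC.
Qed.

Let spanSA_mulA l m : spanSA l m *m A = spanSA l m.
Proof. by rewrite /spanSA mulmxDl -!scalemxAl SA AA. Qed.

Let spanSA_mul l1 m1 l2 m2 : spanSA l1 m1 *m spanSA l2 m2 =
  spanSA (l1 * l2 * (1 + a) + l1 * m2 + m1 * l2) (m1 * m2 - l1 * l2 * a).
Proof.
rewrite {2}/spanSA mulmxDr -!scalemxAr spanSA_mulS spanSA_mulA !spanSAZ spanSAD.
by congr spanSA; ring.
Qed.

Let S_spanSA : S = spanSA 1 0.
Proof. by rewrite /spanSA scale1r scale0r addr0. Qed.

(* On the range of A, S has eigenvalues 1 and a = Q^-2, and [spanSA al be] takes the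
   values 1 and Q there: it is S^(-1/2). *)
Let al : C := - q ^+ 2 / (q + 1).
Let be : C := (q ^+ 2 + q + 1) / (q + 1).

Definition polar_isometry := B *m A *m spanSA al be.

Let adjmx_spanSA : adjmx (spanSA al be) = spanSA al be.
Proof.
have q_real : q \is Num.real by rewrite complex_real.
have hS : adjmx S = S by rewrite /S !adjmxM hA hB mulmxA.
rewrite /spanSA adjmxD !adjmxZ hS hA !conj_Creal //.
  by rewrite /be rpredM ?rpredV ?rpredD ?rpred1 ?rpredX.
by rewrite /al rpredM ?rpredN ?rpredV ?rpredD ?rpred1 ?rpredX.
Qed.

Lemma adjmx_polar_isometry_mul : adjmx polar_isometry *m polar_isometry = A.
Proof.
rewrite /polar_isometry !adjmxM adjmx_spanSA hA hB.
have -> : spanSA al be *m (A *m B) *m (B *m A *m spanSA al be) =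
          spanSA al be *m S *m spanSA al be.
  by rewrite /S !mulmxA -(mulmxA _ B B) BB.
have -> : A = spanSA 0 1 by rewrite /spanSA scale1r scale0r add0r.
rewrite S_spanSA !spanSA_mul.
by congr spanSA; rewrite /al /be /a; field; rewrite q_neq0 q1_neq0.
Qed.

Lemma mxtrace_polar_isometry_mul :
  \tr (polar_isometry *m (A *m B)) = (q * \tr (A *m B) + \tr A) / (q + 1).
Proof.
have trS : \tr S = \tr (A *m B) by rewrite /S mxtrace_mulC mulmxA AA.
rewrite /polar_isometry mxtrace_mulC !mulmxA -(mulmxA A B B) BB -/S.
rewrite {1}S_spanSA spanSA_mul /spanSA mxtraceD !mxtraceZ trS.
by rewrite /al /be /a; field; rewrite q_neq0 q1_neq0.
Qed.

End ProjectionPair.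

Lemma sum_mxtens_index (V : nmodType) m n (F : 'I_(m * n) -> V) :
  \sum_a F a = \sum_i \sum_j F (mxtens_index (i, j)).
Proof.
rewrite pair_big /= (reindex (@mxtens_unindex m n)) /=.
  by apply: eq_bigr => a _; rewrite mxtens_unindexK.
by exists (@mxtens_index m n) => x _; rewrite (mxtens_indexK, mxtens_unindexK).
Qed.

Lemma sum_delta (K : pzSemiRingType) m (F : 'I_m -> K) k :
  \sum_e (e == k)%:R * F e = F k.
Proof.
by rewrite (bigD1 k) //= eqxx mul1r big1 ?addr0 // => e /negbTE ->; rewrite mul0r.
Qed.

Lemma castmx_mulmx (K : pzSemiRingType) m m' (e : m = m') (M N : 'M[K]_m) :
  castmx (e, e) M *m castmx (e, e) N = castmx (e, e) (M *m N).
Proof. by case: m' / e. Qed.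

Lemma mxtrace_castmx (K : pzSemiRingType) m m' (e : m = m') (M : 'M[K]_m) :
  \tr (castmx (e, e) M) = \tr M.
Proof. by case: m' / e. Qed.

Lemma mxtrace_tens (K : comPzRingType) m p (M : 'M[K]_m) (N : 'M[K]_p) :
  \tr (M *t N) = \tr M * \tr N.
Proof.
rewrite /mxtrace sum_mxtens_index mulr_suml; apply: eq_bigr => i _.
by rewrite mulr_sumr; apply: eq_bigr => j _; rewrite tensmxE.
Qed.

Lemma ord1_mxtens (o : 'I_(1 * 1)) : o = mxtens_index (0, 0).
Proof. by apply: val_inj; case: o => -[]. Qed.

Section TripleTensor.
Variable n : nat.

Definition ix2 (i j : 'I_n) : 'I_(n * n) := mxtens_index (i, j).
Definition ix3 (i j k : 'I_n) : 'I_(n * n * n) := mxtens_index (ix2 i j, k).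

Lemma sum_ix2 (V : nmodType) (F : 'I_(n * n) -> V) :
  \sum_a F a = \sum_i \sum_j F (ix2 i j).
Proof. exact: sum_mxtens_index. Qed.

Lemma sum_ix3 (V : nmodType) (F : 'I_(n * n * n) -> V) :
  \sum_u F u = \sum_i \sum_j \sum_k F (ix3 i j k).
Proof. by rewrite sum_mxtens_index sum_ix2. Qed.

Lemma ix3P (u : 'I_(n * n * n)) : exists i j k, u = ix3 i j k.
Proof.
by case: (mxtens_indexP u) => a k; case: (mxtens_indexP a) => i j; exists i, j, k.
Qed.

Lemma matrix_ix3P (T : Type) (M M' : 'M[T]_(n * n * n)) :
  (forall i j k i' j' k', M (ix3 i j k) (ix3 i' j' k') = M' (ix3 i j k) (ix3 i' j' k')) ->
  M = M'.
Proof.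
move=> eqMM'; apply/matrixP => u v.
by have [i [j [k ->]]] := ix3P u; have [i' [j' [k' ->]]] := ix3P v.
Qed.

Lemma cast_ix3 i j k :
  cast_ord (esym (mulnA n n n)) (ix3 i j k) = mxtens_index (i, ix2 j k).
Proof. by apply: val_inj => /=; rewrite /ix2 /= mulnDl -mulnA addnA. Qed.

Variable R : realType.
Variable P : 'M[R[i]]_(n * n).

Lemma P1E i j k i' j' k' :
  P1 P (ix3 i j k) (ix3 i' j' k') = (k == k')%:R * P (ix2 i j) (ix2 i' j').
Proof. by rewrite /P1 tensmxE mxE mulrC. Qed.

Lemma P2E i j k i' j' k' :
  P2 P (ix3 i j k) (ix3 i' j' k') = (i == i')%:R * P (ix2 j k) (ix2 j' k').
Proof. by rewrite /P2 castmxE !cast_ix3 tensmxE mxE. Qed.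

Lemma P1_idem : P *m P = P -> P1 P *m P1 P = P1 P.
Proof. by move=> PP; rewrite /P1 tensmx_mul PP mulmx1. Qed.

Lemma P2_idem : P *m P = P -> P2 P *m P2 P = P2 P.
Proof. by move=> PP; rewrite /P2 castmx_mulmx tensmx_mul PP mulmx1. Qed.

Lemma adjmx_P1 : adjmx P = P -> adjmx (P1 P) = P1 P.
Proof. by move=> hP; rewrite /P1 adjmx_tens hP adjmx1. Qed.

Lemma adjmx_P2 : adjmx P = P -> adjmx (P2 P) = P2 P.
Proof. by move=> hP; rewrite /P2 adjmx_castmx adjmx_tens hP adjmx1. Qed.

Lemma mxtrace_P1 : \tr (P1 P) = \tr P * n%:R.
Proof. by rewrite /P1 mxtrace_tens mxtrace1. Qed.

Lemma mxtrace_P2 : \tr (P2 P) = n%:R * \tr P.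
Proof. by rewrite /P2 mxtrace_castmx mxtrace_tens mxtrace1. Qed.

End TripleTensor.

Section OuterProductSum.
Variable R : realType.
Local Notation C := R[i].
Local Notation norm2 v := (\tr (adjmx v *m v)).

Lemma norm2_tens m p (u : 'cV[C]_m) (v : 'cV[C]_p) :
  norm2 (u *t v) = norm2 u * norm2 v.
Proof. by rewrite adjmx_tens tensmx_mul mxtrace_tens. Qed.

Lemma norm2_castmx m m' (e : m = m') (v : 'cV[C]_m) :
  norm2 (castmx (e, erefl) v) = norm2 v.
Proof. by case: m' / e. Qed.

Lemma norm2_col m (v : 'cV[C]_m) : norm2 v = \sum_i (v i 0)^* * v i 0.
Proof. by rewrite mxtrace_adjmx_mul big_ord1. Qed.

Lemma mxtrace_mul_outer m (M : 'M[C]_m) (u v : 'cV[C]_m) :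
  \tr (M *m (u *m adjmx v)) = \sum_i (v i 0)^* * (M *m u) i 0.
Proof.
by rewrite mulmxA mxtrace_mulC mxtrace_adjmx_mul big_ord1.
Qed.

Lemma mxtrace_sum_outer_le (T : finType) m (W : 'M[C]_m) (u v : T -> 'cV[C]_m) :
  (forall t, adjmx W *m W *m u t = u t) ->
  \tr (W *m \sum_t u t *m adjmx (v t)) + (\tr (W *m \sum_t u t *m adjmx (v t)))^*
    <= \sum_t (norm2 (u t) + norm2 (v t)).
Proof.
move=> WWu; set z := \tr _; set s := fun t => \tr (W *m (u t *m adjmx (v t))).
have z_sum : z = \sum_t s t by rewrite /z mulmx_sumr raddf_sum.
have isometry t : norm2 (W *m u t) = norm2 (u t).
  by rewrite adjmxM -mulmxA (mulmxA (adjmx W)) WWu.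
have expand t : norm2 (u t) + norm2 (v t) - (s t + (s t)^*) =
    \sum_i ((W *m u t) i 0 - v t i 0)^* * ((W *m u t) i 0 - v t i 0).
  rewrite -(isometry t) /s mxtrace_mul_outer !norm2_col rmorph_sum -!big_split -sumrB /=.
  by apply: eq_bigr => i _; rewrite rmorphB rmorphM /= conjCK; ring.
rewrite -subr_ge0 z_sum rmorph_sum -big_split -sumrB /=.
apply: sumr_ge0 => t _; rewrite expand; apply: sumr_ge0 => i _.
by rewrite mulrC mul_conjC_ge0.
Qed.

End OuterProductSum.

Section ProjectorDecomposition.
Variable R : realType.
Local Notation C := R[i].
Local Notation norm2 v := (\tr (adjmx v *m v)).
Variable n : nat.
Variable P : 'M[C]_(n * n).
Hypotheses (hP : adjmx P = P) (PP : P *m P = P).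

Lemma sum_mul_conj_proj a b : \sum_c P a c * (P b c)^* = P a b.
Proof.
transitivity ((P *m adjmx P) a b); last by rewrite hP PP.
by rewrite mxE; apply: eq_bigr => c _; rewrite adjmxE.
Qed.

Lemma norm2_col_proj c : norm2 (col c P) = P c c.
Proof.
rewrite norm2_col -[in RHS]PP mxE; apply: eq_bigr => a _.
by rewrite !mxE -[in P c a]hP adjmxE.
Qed.

Lemma sum_norm2_row_slices d : \sum_j0 norm2 (\col_k P (ix2 j0 k) d) = P d d.
Proof.
rewrite -norm2_col_proj norm2_col sum_ix2; apply: eq_bigr => j0 _.
by rewrite norm2_col; apply: eq_bigr => k _; rewrite !mxE.
Qed.

Lemma sum_norm2_col_slices c : \sum_j0 norm2 (\col_i P (ix2 i j0) c) = P c c.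
Proof.
rewrite -norm2_col_proj norm2_col sum_ix2 [RHS]exchange_big; apply: eq_bigr => j0 _.
by rewrite norm2_col; apply: eq_bigr => i _; rewrite !mxE.
Qed.

Local Notation T := ('I_(n * n) * 'I_(n * n) * 'I_n)%type.

Lemma sum_triple (V : nmodType) (F : T -> V) :
  \sum_t F t = \sum_c \sum_d \sum_j0 F (c, d, j0).
Proof.
rewrite (pair_bigA _ (fun c d => \sum_j0 F (c, d, j0))) /=.
by rewrite (pair_bigA _ (fun cd j0 => F (cd.1, cd.2, j0))) /=; apply: eq_bigr => -[[]].
Qed.

(* As P = P P^*, the entry of P1 P2 at (ijk, i'j'k') is
   sum_(c, d, j0) P(ij, c) P(j0 k, d) (P(i' j0, c) P(j'k', d))^*. *)
Definition P1P2_lvec (t : T) : 'cV[C]_(n * n * n) :=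
  let: (c, d, j0) := t in col c P *t \col_k P (ix2 j0 k) d.
Definition P1P2_rvec (t : T) : 'cV[C]_(n * n * n) :=
  let: (c, d, j0) := t in
  castmx (mulnA n n n, erefl) ((\col_i P (ix2 i j0) c) *t col d P).

Lemma P1P2_lvecE c d j0 i j k :
  P1P2_lvec (c, d, j0) (ix3 i j k) 0 = P (ix2 i j) c * P (ix2 j0 k) d.
Proof.
transitivity (col c P (ix2 i j) 0 * (\col_k P (ix2 j0 k) d) k 0); last by rewrite !mxE.
by rewrite /= [in LHS](ord1_mxtens 0); exact: tensmxE.
Qed.

Lemma P1P2_rvecE c d j0 i j k :
  P1P2_rvec (c, d, j0) (ix3 i j k) 0 = P (ix2 i j0) c * P (ix2 j k) d.
Proof.
transitivity ((\col_i P (ix2 i j0) c) i 0 * col d P (ix2 j k) 0); last by rewrite !mxE.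
by rewrite /= castmxE cast_ix3 (ord1_mxtens (cast_ord _ _)); exact: tensmxE.
Qed.

Lemma P1_mul_P2E : P1 P *m P2 P = \sum_t P1P2_lvec t *m adjmx (P1P2_rvec t).
Proof.
apply: matrix_ix3P => i j k i' j' k'.
rewrite mxE sum_ix3 summxE sum_triple.
under eq_bigr => a _ do under eq_bigr => b _ do under eq_bigr => e _ do
  rewrite P1E P2E (eq_sym k) -mulrA.
under eq_bigr => a _ do under eq_bigr => b _ do rewrite sum_delta mulrCA.
under eq_bigr => a _ do rewrite -mulr_sumr.
under [RHS]eq_bigr do rewrite exchange_big.
rewrite sum_delta [RHS]exchange_big; apply: eq_bigr => j0 _.
rewrite -!sum_mul_conj_proj big_distrlr; apply: eq_bigr => c _; apply: eq_bigr => d _.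
by rewrite mxE big_ord1 adjmxE P1P2_lvecE P1P2_rvecE rmorphM mulrACA.
Qed.

Lemma P1_mul_P1P2_lvec t : P1 P *m P1P2_lvec t = P1P2_lvec t.
Proof.
case: t => -[c d] j0.
transitivity ((P *m col c P) *t (1%:M *m \col_k P (ix2 j0 k) d)).
  exact: (tensmx_mul P 1%:M (col c P) (\col_k P (ix2 j0 k) d)).
by rewrite mul1mx /= !colE mulmxA PP.
Qed.

Lemma sum_norm2_P1P2_lvec : \sum_t norm2 (P1P2_lvec t) = (\tr P) ^+ 2.
Proof.
rewrite sum_triple expr2 big_distrlr; apply: eq_bigr => c _; apply: eq_bigr => d _.
under eq_bigr do rewrite /= norm2_tens norm2_col_proj.
by rewrite -mulr_sumr sum_norm2_row_slices.
Qed.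

Lemma sum_norm2_P1P2_rvec : \sum_t norm2 (P1P2_rvec t) = (\tr P) ^+ 2.
Proof.
rewrite sum_triple expr2 big_distrlr; apply: eq_bigr => c _; apply: eq_bigr => d _.
under eq_bigr do rewrite /= norm2_castmx norm2_tens norm2_col_proj.
by rewrite -mulr_suml sum_norm2_col_slices.
Qed.

Lemma mxtrace_P1P2_le (W : 'M[C]_(n * n * n)) : adjmx W *m W = P1 P ->
  \tr (W *m (P1 P *m P2 P)) + (\tr (W *m (P1 P *m P2 P)))^* <= (\tr P) ^+ 2 *+ 2.
Proof.
move=> WW; rewrite P1_mul_P2E.
apply: le_trans (mxtrace_sum_outer_le P1P2_rvec _) _ => [t|].
  by rewrite WW P1_mul_P1P2_lvec.
by rewrite big_split /= sum_norm2_P1P2_lvec sum_norm2_P1P2_rvec.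
Qed.

End ProjectorDecomposition.

Theorem lemma6 (R : realType) (n : nat) (Q : R) (P : 'M[R[i]]_(n * n)) (r : nat) :
  (2 <= n)%N -> 0 < Q ->
  adjmx P = P -> P *m P = P ->
  (Q ^+ 2)%:C *: (P1 P *m P2 P *m P1 P - P2 P *m P1 P *m P2 P) = P1 P - P2 P ->
  \rank P = r ->
  let k : R := (\rank (P1 P - P2 P))%:R / 2 in
  (r * n)%:R - k + Q^-1 * k <= (r ^ 2)%:R.
Proof.
move=> _ Q_gt0 hP PP rel rankP /=; set k := _%:R / 2.
have [hA hB] := (adjmx_P1 hP, adjmx_P2 hP).
have [AA BB] := (P1_idem PP, P2_idem PP).
have trP : \tr P = r%:R by rewrite mxtrace_idem // rankP.
set X := (r * n)%:R - k + Q^-1 * k.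
have trW : \tr (polar_isometry (P1 P) (P2 P) Q *m (P1 P *m P2 P)) = X%:C.
  rewrite (mxtrace_polar_isometry_mul AA BB Q_gt0 rel).
  rewrite (mxtrace_mul_proj hA hB AA BB Q_gt0 rel) mxtrace_P1 mxtrace_P2 trP /X /k.
  rewrite !(rmorphD, rmorphN, rmorphM, rmorph_nat, fmorphV).
  by field; rewrite complex_gt0_neq0 ?complex_gt0_addr1_neq0.
have := mxtrace_P1P2_le hP PP (adjmx_polar_isometry_mul hA hB AA BB Q_gt0 rel).
rewrite trW trP conj_Creal ?complex_real // -rmorphD -natrX.
rewrite -(rmorph_nat (real_complex R)) -rmorphMn lecR.
lra.
Qed.
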